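(* For every real $x > 0$ and every natural number $n$, $\mathrm{LB}_{\ln}(x,n) \le \ln(x) \le \mathrm{UB}_{\ln}(x,n)$.
   Context: For $1 < x \le 2$ and natural $n$: \[\mathrm{LB}_{\ln}(x,n) = \sum_{i=1}^{2n}(-1)^{i+1}\frac{(x-1)^i}{i},\qquad \mathrm{UB}_{\ln}(x,n) = \sum_{i=1}^{2n+1}(-1)^{i+1}\frac{(x-1)^i}{i}.\] Further: $\mathrm{LB}_{\ln}(1,n)=\mathrm{UB}_{\ln}(1,n)=0$; for $0<x<1$: $\mathrm{LB}_{\ln}(x,n) = -\mathrm{UB}_{\ln}(1/x,n)$ and $\mathrm{UB}_{\ln}(x,n) = -\mathrm{LB}_{\ln}(1/x,n)$; for $x>2$: let $m$ be the natural number and $y$ the real with $x = 2^m y$ and $1 \le y < 2$ (equivalently $(m,y)=\mathrm{lnnat}(x,2)$, where $\mathrm{lnnat}(x,k)=(0,x)$ if $x<k$ and otherwise $(m'+1,y')$ with $(m',y')=\mathrm{lnnat}(x/k,k)$), and set $\mathrm{LB}_{\ln}(x,n) = m\,\mathrm{LB}_{\ln}(2,n) + \mathrm{LB}_{\ln}(y,n)$ and $\mathrm{UB}_{\ln}(x,n) = m\,\mathrm{UB}_{\ln}(2,n) + \mathrm{UB}_{\ln}(y,n)$. *)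

From Stdlib Require Import Reals Lra Lia ZArith.
Open Scope R_scope.

Fixpoint lnsum (x : R) (N : nat) : R :=
  match N with
  | O => 0
  | S N' => lnsum x N' + (-1) ^ (S N' + 1) * (x - 1) ^ (S N') / INR (S N')
  end.

(* Implemented with fuel; the recursion depth m satisfies k^m <= x, so for
   k = 2 and x > 0 the fuel Z.to_nat (up x) (> x >= 2^m > m) is always enough. *)
Fixpoint lnnat_fuel (fuel : nat) (x k : R) : nat * R :=
  match fuel with
  | O => (O, x)
  | S f =>
      if Rlt_dec x k then (O, x)
      else let (m', y') := lnnat_fuel f (x / k) k in (S m', y')
  end.

Definition lnnat (x k : R) : nat * R := lnnat_fuel (Z.to_nat (up x)) x k.

Definition LB_ln_ge1 (x : R) (n : nat) : R :=
  if Rle_dec x 2 then lnsum x (2 * n)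
  else let (m, y) := lnnat x 2 in
       INR m * lnsum 2 (2 * n) + lnsum y (2 * n).

Definition UB_ln_ge1 (x : R) (n : nat) : R :=
  if Rle_dec x 2 then lnsum x (2 * n + 1)
  else let (m, y) := lnnat x 2 in
       INR m * lnsum 2 (2 * n + 1) + lnsum y (2 * n + 1).

Definition LB_ln (x : R) (n : nat) : R :=
  if Rle_dec 1 x then LB_ln_ge1 x n else - UB_ln_ge1 (/ x) n.

Definition UB_ln (x : R) (n : nat) : R :=
  if Rle_dec 1 x then UB_ln_ge1 x n else - LB_ln_ge1 (/ x) n.

From Stdlib Require Import Reals Lra Lia.
From Coquelicot Require Import Coquelicot.
Open Scope R_scope.

(* For y >= 1, [ln y - lnsum y N] vanishes at 1 and has derivative [(1 - y)^N / y];
   by the mean value theorem it equals [(1 - c)^N / c * (y - 1)] for some c in [1, y],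
   which is >= 0 for N even and <= 0 for N odd.  Arguments x > 2 are reduced to
   [1, 2] through x = 2^m y, and arguments x < 1 through ln x = - ln (1/x). *)

Lemma lnsum_1 (N : nat) : lnsum 1 N = 0.
Proof.
  induction N as [|N IH]; [reflexivity|].
  cbn [lnsum]. rewrite IH, Rminus_diag, (pow_i (S N)) by lia. unfold Rdiv. ring.
Qed.

Lemma is_derive_lnsum_term (i : nat) (y : R) :
  is_derive (fun z => (-1) ^ (S i + 1) * (z - 1) ^ S i / INR (S i)) y ((1 - y) ^ i).
Proof.
  auto_derive; [exact I|].
  change (match i with 0%nat => 1 | S _ => INR i + 1 end) with (INR (S i)).
  replace (1 - y) with ((-1) * (y + - (1))) by ring.
  rewrite Rpow_mult_distr, pow_add.
  field. apply not_0_INR. lia.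
Qed.

Lemma is_derive_lnsum (N : nat) (y : R) : 0 < y ->
  is_derive (fun z => lnsum z N) y ((1 - (1 - y) ^ N) / y).
Proof.
  intros Hy. induction N as [|N IH].
  - simpl. replace ((1 - 1) / y) with 0 by (field; lra).
    auto_derive; [exact I | ring].
  - replace ((1 - (1 - y) ^ S N) / y) with ((1 - (1 - y) ^ N) / y + (1 - y) ^ N)
      by (simpl; field; lra).
    apply (is_derive_plus (fun z => lnsum z N)); [exact IH|].
    apply is_derive_lnsum_term.
Qed.

Lemma is_derive_ln_minus_lnsum (N : nat) (y : R) : 0 < y ->
  is_derive (fun z => ln z - lnsum z N) y ((1 - y) ^ N / y).
Proof.
  intros Hy.
  replace ((1 - y) ^ N / y) with (/ y - (1 - (1 - y) ^ N) / y) by (field; lra).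
  apply (is_derive_minus ln (fun z => lnsum z N)).
  - apply is_derive_ln; exact Hy.
  - apply is_derive_lnsum; exact Hy.
Qed.

Lemma ln_minus_lnsum_remainder (N : nat) (y : R) : 1 <= y ->
  exists c, 1 <= c <= y /\ ln y - lnsum y N = (1 - c) ^ N / c * (y - 1).
Proof.
  intros Hy.
  assert (Hmin : Rmin 1 y = 1) by (apply Rmin_left; exact Hy).
  assert (Hmax : Rmax 1 y = y) by (apply Rmax_right; exact Hy).
  destruct (MVT_gen (fun z => ln z - lnsum z N) 1 y (fun z => (1 - z) ^ N / z))
    as [c [Hc E]]; rewrite ?Hmin, ?Hmax in *.
  - intros z Hz. apply is_derive_ln_minus_lnsum. lra.
  - intros z Hz. apply continuity_pt_filterlim,
      (@ex_derive_continuous R_AbsRing R_NormedModule (fun z => ln z - lnsum z N)).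
    eexists. apply is_derive_ln_minus_lnsum. lra.
  - exists c. split; [exact Hc|].
    rewrite <- E, ln_1, lnsum_1. ring.
Qed.

Lemma lnsum_even_le_ln (n : nat) (y : R) : 1 <= y -> lnsum y (2 * n) <= ln y.
Proof.
  intros Hy. destruct (ln_minus_lnsum_remainder (2 * n) y Hy) as [c [Hc E]].
  assert (0 <= (1 - c) ^ (2 * n) / c * (y - 1)).
  { apply Rmult_le_pos; [|lra]. apply Rmult_le_pos.
    - rewrite pow_mult. apply pow_le. nra.
    - left. apply Rinv_0_lt_compat. lra. }
  lra.
Qed.

Lemma ln_le_lnsum_odd (n : nat) (y : R) : 1 <= y -> ln y <= lnsum y (2 * n + 1).
Proof.
  intros Hy. destruct (ln_minus_lnsum_remainder (2 * n + 1) y Hy) as [c [Hc E]].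
  rewrite pow_add, pow_mult in E.
  assert (0 <= ((1 - c) ^ 2) ^ n * (c - 1) / c * (y - 1)).
  { apply Rmult_le_pos; [|lra]. apply Rmult_le_pos.
    - apply Rmult_le_pos; [apply pow_le; nra | lra].
    - left. apply Rinv_0_lt_compat. lra. }
  assert (((1 - c) ^ 2) ^ n * (1 - c) ^ 1 / c * (y - 1)
          = - (((1 - c) ^ 2) ^ n * (c - 1) / c * (y - 1))) by (field; lra).
  lra.
Qed.

Lemma lnnat_fuel_decomp (fuel : nat) (x k : R) (m : nat) (y : R) :
  0 < k -> 1 <= x -> lnnat_fuel fuel x k = (m, y) -> x = k ^ m * y /\ 1 <= y.
Proof.
  intros Hk. revert x m y.
  induction fuel as [|fuel IH]; intros x m y Hx Hxy; simpl in Hxy.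
  - injection Hxy as <- <-. split; [ring | exact Hx].
  - destruct (Rlt_dec x k) as [_ | Hkx].
    + injection Hxy as <- <-. split; [ring | exact Hx].
    + destruct (lnnat_fuel fuel (x / k) k) as [m' y'] eqn:E.
      injection Hxy as <- <-.
      assert (Hxk : 1 <= x / k)
        by (apply Rnot_lt_le in Hkx; apply Rmult_le_reg_r with k; [lra|]; field_simplify; lra).
      destruct (IH (x / k) m' y' Hxk E) as [Ex Ey].
      split; [|exact Ey]. simpl. rewrite Rmult_assoc, <- Ex. field. lra.
Qed.

Lemma ln_between_bounds_ge1 (x : R) (n : nat) : 1 <= x ->
  LB_ln_ge1 x n <= ln x <= UB_ln_ge1 x n.
Proof.
  intros Hx. unfold LB_ln_ge1, UB_ln_ge1.
  destruct (Rle_dec x 2).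
  { split; [apply lnsum_even_le_ln | apply ln_le_lnsum_odd]; exact Hx. }
  destruct (lnnat x 2) as [m y] eqn:E.
  destruct (lnnat_fuel_decomp _ x 2 m y ltac:(lra) Hx E) as [Ex Hy].
  assert (Hln : ln x = INR m * ln 2 + ln y).
  { rewrite Ex, ln_mult, ln_pow; [reflexivity | lra | apply pow_lt; lra | lra]. }
  pose proof (lnsum_even_le_ln n 2 ltac:(lra)).
  pose proof (ln_le_lnsum_odd n 2 ltac:(lra)).
  pose proof (lnsum_even_le_ln n y Hy).
  pose proof (ln_le_lnsum_odd n y Hy).
  pose proof (pos_INR m).
  rewrite Hln. split; apply Rplus_le_compat; try apply Rmult_le_compat_l; lra.
Qed.

Theorem proposition8 (x : R) (n : nat) (hx : 0 < x) :
  LB_ln x n <= ln x <= UB_ln x n.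
Proof.
  unfold LB_ln, UB_ln.
  destruct (Rle_dec 1 x) as [H1x | Hx1].
  - apply ln_between_bounds_ge1. exact H1x.
  - assert (Hinv : 1 <= / x) by (rewrite <- Rinv_1; apply Rinv_le_contravar; lra).
    destruct (ln_between_bounds_ge1 (/ x) n Hinv).
    rewrite ln_Rinv in * by exact hx. lra.
Qed.
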